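(* If $n>k>\ell\geq t+2$, then $r_2(n,k,\ell,t)>r_2(n,\ell,k,t)$, where $r_2(n,k,\ell,t)=S(n-t-1,k-t-1)\big((t+1)S(n-t,\ell-t)-tS(n-t-1,\ell-t-1)\big)$.
   Context: $S(n,k)$ denotes the Stirling number of the second kind, the number of partitions of an $n$-element set into $k$ nonempty blocks. *)

From mathcomp Require Import all_boot all_order all_algebra.
Set Implicit Arguments. Unset Strict Implicit. Unset Printing Implicit Defensive.
Import GRing.Theory Num.Theory.

Fixpoint stirling2 (n k : nat) : nat :=
  match n, k with
  | 0, 0 => 1
  | 0, _.+1 => 0
  | _.+1, 0 => 0
  | n'.+1, k'.+1 => k'.+1 * stirling2 n' k'.+1 + stirling2 n' k'
  end.

Local Open Scope ring_scope.

(* r_2(n,k,l,t) = S(n-t-1,k-t-1) ((t+1) S(n-t,l-t) - t S(n-t-1,l-t-1)),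
   computed in int (natural-number arguments of S use truncated subtraction,
   harmless under the hypotheses n > k > l >= t+2). *)
Definition r2 (n k l t : nat) : int :=
  (stirling2 (n - t - 1) (k - t - 1))%:Z *
  ((t.+1)%:Z * (stirling2 (n - t) (l - t))%:Z
   - t%:Z * (stirling2 (n - t - 1) (l - t - 1))%:Z).

Lemma stirling2_sanity : [:: stirling2 4 2; stirling2 5 3; stirling2 3 3; stirling2 3 0] = [:: 7; 25; 1; 0]%N.
Proof. by []. Qed.

(* Write N = n-t-1, K = k-t-1, L = l-t-1, so that 1 <= L < K < N.  Expanding
   S(N+1,L+1) by the recurrence, r_2(n,k,l,t) - r_2(n,l,k,t) equals
   (t+1) ((L+1) S(N,L+1) S(N,K) - (K+1) S(N,K+1) S(N,L)), and after
   multiplication by L! K! the bracket becomes F_N(L+1) F_N(K) - F_N(L) F_N(K+1)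
   for F_N(k) = k! S(N,k), the number of surjections from an N-set onto a
   k-set.  Its positivity is strict log-concavity of F_N, which propagates
   along the recurrence F_(N+1)(k+1) = (k+1) (F_N(k+1) + F_N(k)): both taking
   neighbouring sums and multiplying by the index preserve log-concavity. *)

From mathcomp Require Import all_boot all_order all_algebra.
From mathcomp Require Import zify ring.
Import GRing.Theory Num.Theory.

Set Implicit Arguments.
Unset Strict Implicit.
Unset Printing Implicit Defensive.

Lemma stirling2SS N k :
  stirling2 N.+1 k.+1 = k.+1 * stirling2 N k.+1 + stirling2 N k.
Proof. by []. Qed.

Lemma stirling2_gt0 N k : 0 < k <= N -> 0 < stirling2 N k.
Proof.
elim: N k => [|N IHN] [|[|k]] // le_kN; rewrite stirling2SS.
- by case: N IHN {le_kN} => [|N] // /(_ 1); lia.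
- by have := IHN k.+1; lia.
Qed.

Definition surj (N k : nat) : nat := k`! * stirling2 N k.

Lemma surj0S k : surj 0 k.+1 = 0.
Proof. by rewrite /surj /= muln0. Qed.

Lemma surjS0 N : surj N.+1 0 = 0.
Proof. by rewrite /surj /= muln0. Qed.

Lemma surjSS N k : surj N.+1 k.+1 = k.+1 * (surj N k.+1 + surj N k).
Proof. by rewrite /surj stirling2SS factS; ring. Qed.

Lemma surj_gt0 N k : 0 < k <= N -> 0 < surj N k.
Proof. by move=> hk; rewrite muln_gt0 fact_gt0 stirling2_gt0. Qed.

Lemma mul_spread p d e : (p + d) * (p + e) = p * (p + d + e) + d * e.
Proof. by ring. Qed.

(* The multiplicative form also forbids internal zeros, which is what makes
   the class closed under neighbouring sums. *)
Definition log_concave (a : nat -> nat) :=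
  forall p d e, a p * a (p + d + e) <= a (p + d) * a (p + e).

Lemma log_concave_pairsum a :
  log_concave a -> log_concave (fun k => a k.+1 + a k).
Proof.
move=> lc_a p d [|e]; first by rewrite !addn0 mulnC.
(* After expansion, each of the four products on the left is dominated by one
   on the right: two diagonal instances and two shifted cross instances. *)
have := lc_a p.+1 d e.+1; have := lc_a p d e.+1.
have := lc_a p.+1 d e; have := lc_a p d e.+2.
rewrite !addSn !addnS; nia.
Qed.

Lemma surj_log_concave N : log_concave (surj N).
Proof.
elim: N => [|N IHN] [|p] d e.
- case: d => [|d]; first by rewrite !add0n mulnC.
  by case: e => [|e]; [rewrite !addn0 mulnC | rewrite !addnS surj0S muln0].
- by rewrite !addSn surj0S mul0n.
- by rewrite surjS0 mul0n.
rewrite !addSn !surjSS mulnACA [X in _ <= X]mulnACA.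
apply: leq_mul; first by rewrite -!addSn mul_spread leq_addr.
exact: log_concave_pairsum IHN p d e.
Qed.

Lemma surj_log_concave_strict N p d e :
  0 < p -> 0 < d -> 0 < e -> p + d + e <= N ->
  surj N p * surj N (p + d + e) < surj N (p + d) * surj N (p + e).
Proof.
case: N p => [|M] [|q] // _ d_gt0 e_gt0 le_N.
have pos_d : 0 < surj M (q + d).+1 + surj M (q + d).
  by rewrite ltn_addr // surj_gt0 //; lia.
have pos_e : 0 < surj M (q + e).+1 + surj M (q + e).
  by rewrite ltn_addr // surj_gt0 //; lia.
rewrite !addSn !surjSS mulnACA [X in _ < X]mulnACA.
apply: leq_ltn_trans (leq_mul (leqnn _) (log_concave_pairsum (surj_log_concave M) q d e)) _.
by rewrite ltn_pmul2r ?muln_gt0 ?pos_d // -!addSn mul_spread -addn1 leq_add2l muln_gt0 d_gt0.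
Qed.

Lemma stirling2_succ_ratio_lt N K L :
  0 < L -> L < K -> K < N ->
  K.+1 * stirling2 N K.+1 * stirling2 N L < L.+1 * stirling2 N L.+1 * stirling2 N K.
Proof.
move=> L_gt0 lt_LK lt_KN.
have key := @surj_log_concave_strict N L 1 (K - L) L_gt0 isT ltac:(lia) ltac:(lia).
rewrite addn1 addSn subnKC ?(ltnW lt_LK) // in key.
have facts_gt0 : 0 < L`! * K`! by rewrite muln_gt0 !fact_gt0.
rewrite -(ltn_pmul2l facts_gt0); move: key; congr (_ < _).
- by rewrite /surj factS; ring.
- by rewrite /surj factS; ring.
Qed.

Lemma stirling2_cross_lt N K L t :
  0 < L -> L < K -> K < N ->
  stirling2 N L * (t.+1 * K.+1 * stirling2 N K.+1 + stirling2 N K)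
  < stirling2 N K * (t.+1 * L.+1 * stirling2 N L.+1 + stirling2 N L).
Proof.
move=> L_gt0 lt_LK lt_KN; set sK := stirling2 N K; set sL := stirling2 N L.
have -> : sL * (t.+1 * K.+1 * stirling2 N K.+1 + sK)
  = t.+1 * (K.+1 * stirling2 N K.+1 * sL) + sK * sL by ring.
have -> : sK * (t.+1 * L.+1 * stirling2 N L.+1 + sL)
  = t.+1 * (L.+1 * stirling2 N L.+1 * sK) + sK * sL by ring.
by rewrite ltn_add2r ltn_pmul2l // stirling2_succ_ratio_lt.
Qed.

Local Open Scope ring_scope.

Lemma r2_shift N K L t :
  r2 (N + t).+1 (K + t).+1 (L + t).+1 t =
  (stirling2 N K * (t.+1 * L.+1 * stirling2 N L.+1 + stirling2 N L))%N%:Z.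
Proof.
by rewrite /r2 -!addSn !addnK !subn1 !succnK stirling2SS !(PoszD, PoszM); ring.
Qed.

Theorem mainTheorem20 (n k l t : nat) :
  (k < n)%N -> (l < k)%N -> (t + 2 <= l)%N ->
  r2 n l k t < r2 n k l t.
Proof.
move=> lt_kn lt_lk le_tl.
have [N EN] : exists N, n = (N + t).+1 by exists (n - t - 1)%N; lia.
have [K EK] : exists K, k = (K + t).+1 by exists (k - t - 1)%N; lia.
have [L EL] : exists L, l = (L + t).+1 by exists (l - t - 1)%N; lia.
subst n k l; rewrite !r2_shift ltz_nat stirling2_cross_lt //; lia.
Qed.
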